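(* Work in dimension $d=2$. Let $\tau=(V,E)$ be a rooted tree and $\sigma$ a bijection of $V$ such that $\sigma.\tau$ is a rooted tree and $F(\tau)=F(\sigma.\tau)$ (as multilinear maps $\mathcal{C}_2^{V}\to\mathcal{C}_2$). Then $\sigma(C_v)=C_v$ for every $v\in V$; consequently $E_\sigma=E$. In particular $F(\sigma.\tau)=F(\tau)$ if and only if $\sigma.\tau=\tau$.
   Context: A rooted tree on a finite vertex set $V\subset\mathbb{N}$ is a set $E$ of ordered pairs of elements of $V$ (an edge $(v,w)$ means $w$ is a child of $v$) such that exactly one vertex $r$ (the root) has no parent, every other vertex has exactly one parent, and every vertex is connected to the root by following parents. $C_v=\{w:(v,w)\in E\}$; $\tau_v$ is the subtree of $v$ and its descendants. For a bijection $\sigma$ of $V$, set $E_\sigma=\{(v,\sigma(w)):(v,w)\in E\}$ and $\sigma.\tau=(V,E_\sigma)$ (each vertex other than $\sigma(r)$ has exactly one parent; it is a rooted tree when it is weakly connected). Note this is not the usual relabelling action. Let $\mathcal{C}_d=C^\infty(\mathbb{R}^d,\mathbb{R}^d)$, $g_j$ the $j$-th coordinate, $\partial_j=\partial/\partial x_j$. For $\tau$ with root $r$ whose children are $v_1,\dots,v_k$, define recursively $F(\tau)((f^i)_{i\in V})=\sum_{j_1,\dots,j_k=1}^d F(\tau_{v_1})((f^i)_{i\in V(\tau_{v_1})})_{j_1}\cdots F(\tau_{v_k})((f^i)_{i\in V(\tau_{v_k})})_{j_k}\,\partial_{j_1}\cdots\partial_{j_k}f^r$ (for a single vertex $F(\tau)=f^r$).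 *)

From Stdlib Require Import Reals List Arith Relations.
From Coquelicot Require Import Coquelicot.
Import ListNotations.
Open Scope R_scope.

(* A point of R^2 and a vector field R^2 -> R^2. Coordinate 0 is [fst],
   every other index denotes coordinate 1 ([snd]). *)
Definition VF := (R * R)%type -> (R * R)%type.

Definition coord (j : nat) (x : R * R) : R := if Nat.eqb j 0 then fst x else snd x.
Definition upd (j : nat) (x : R * R) (t : R) : R * R :=
  if Nat.eqb j 0 then (t, snd x) else (fst x, t).

Definition pder (j : nat) (h : R * R -> R) (x : R * R) : R :=
  Derive (fun t => h (upd j x t)) (coord j x).

Fixpoint iterp (js : list nat) (h : R * R -> R) : R * R -> R :=
  match js with
  | [] => h
  | j :: js' => pder j (iterp js' h)
  end.

Definition smooth_scalar (h : R * R -> R) : Prop :=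
  forall js : list nat,
    (forall (j : nat) (x : R * R), (j < 2)%nat ->
        ex_derive (fun t => iterp js h (upd j x t)) (coord j x)) /\
    (forall x : R * R, continuous (iterp js h) x).

Definition smooth_vf (g : VF) : Prop :=
  smooth_scalar (fun x => fst (g x)) /\ smooth_scalar (fun x => snd (g x)).

Definition pderV (j : nat) (g : VF) : VF :=
  fun x => (pder j (fun y => fst (g y)) x, pder j (fun y => snd (g y)) x).

(* V and E are finite sets, represented by duplicate-free lists. *)
Definition children (E : list (nat * nat)) (v : nat) : list nat :=
  map snd (filter (fun e => Nat.eqb (fst e) v) E).

Definition rooted_at (V : list nat) (E : list (nat * nat)) (r : nat) : Prop :=
  NoDup V /\ NoDup E /\
  (forall v w, In (v, w) E -> In v V /\ In w V) /\
  In r V /\ (forall v, ~ In (v, r) E) /\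
  (forall u, In u V -> (forall v, ~ In (v, u) E) -> u = r) /\
  (forall w, In w V -> w <> r -> exists! v, In (v, w) E) /\
  (forall w, In w V -> clos_refl_trans nat (fun a b => In (b, a) E) w r).

Definition is_rooted_tree (V : list nat) (E : list (nat * nat)) : Prop :=
  exists r, rooted_at V E r.

Definition tree_root (V : list nat) (E : list (nat * nat)) : nat :=
  match find (fun v => negb (existsb (fun e => Nat.eqb (snd e) v) E)) V with
  | Some r => r
  | None => 0%nat
  end.

Definition bij_on (V : list nat) (s : nat -> nat) : Prop :=
  (forall v, In v V -> In (s v) V) /\
  (forall v w, In v V -> In w V -> s v = s w -> v = w) /\
  (forall w, In w V -> exists v, In v V /\ s v = w).

Definition act (s : nat -> nat) (E : list (nat * nat)) : list (nat * nat) :=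
  map (fun e => (fst e, s (snd e))) E.

(* G ks g = sum_{j_1..j_k} ks_1(x)_{j_1} ... ks_k(x)_{j_k} d_{j_1}...d_{j_k} g *)
Fixpoint Gop (ks : list VF) (g : VF) : VF :=
  match ks with
  | [] => g
  | k :: ks' => fun x =>
      let a := Gop ks' (pderV 0 g) x in
      let b := Gop ks' (pderV 1 g) x in
      (fst (k x) * fst a + snd (k x) * fst b,
       fst (k x) * snd a + snd (k x) * snd b)
  end.

(* F(tau_v), computed with fuel n (n >= height suffices) *)
Fixpoint Fv (n : nat) (E : list (nat * nat)) (f : nat -> VF) (v : nat) : VF :=
  match n with
  | O => f v
  | S n' => Gop (map (Fv n' E f) (children E v)) (f v)
  end.

Definition Ftree (V : list nat) (E : list (nat * nat)) (f : nat -> VF) : VF :=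
  Fv (length V) E f (tree_root V E).

Definition F_eq (V : list nat) (E E' : list (nat * nat)) : Prop :=
  forall f : nat -> VF, (forall i, In i V -> smooth_vf (f i)) ->
    forall x, Ftree V E f x = Ftree V E' f x.

Definition same_set {A : Type} (l1 l2 : list A) : Prop :=
  forall a, In a l1 <-> In a l2.

From Stdlib Require Import Reals List Relations Lia Lra.
From Stdlib Require Import Permutation FunctionalExtensionality Classical.
From Coquelicot Require Import Coquelicot.
Import ListNotations.
Open Scope R_scope.

(* For an edge (p, w) of tau choose monomial fields f^v = x^(A v) y^(B v) e_v, where
   e_w = e_2, e_v = e_1 otherwise, B v = [v = p] and A v + B v is the number of children
   of v in tau. At the origin a product x^A y^B survives exactly A derivatives in x and B
   in y, so F(tau')(f)(0) <> 0 iff every vertex v of tau' has A v children different from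
   w and B v children equal to w; when tau' has the child numbers of tau, this says that
   (p, w) is an edge of tau'. As sigma.tau has the child numbers of tau, F(tau) = F(sigma.tau)
   gives inclusions of edge sets both ways.
   Conversely, equal edge sets give equal F because mixed partial derivatives commute. *)

Definition mono (c : R) (A B : nat) : R * R -> R := fun x => c * fst x ^ A * snd x ^ B.

Lemma pder_mono j c A B :
  pder j (mono c A B) =
  if j =? 0 then mono (c * INR A) (A - 1) B else mono (c * INR B) A (B - 1).
Proof.
  apply functional_extensionality; intros [x1 x2].
  unfold pder, mono, coord, upd; destruct (j =? 0); apply is_derive_unique; simpl;
    auto_derive; trivial; rewrite Nat.sub_1_r; ring.
Qed.

Lemma ex_derive_mono j c A B x : ex_derive (fun t => mono c A B (upd j x t)) (coord j x).
Proof.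
  destruct x as [x1 x2]; unfold mono, coord, upd.
  destruct (j =? 0); simpl; auto_derive; trivial.
Qed.

Lemma iterp_mono js c A B : exists c' A' B', iterp js (mono c A B) = mono c' A' B'.
Proof.
  induction js as [|j js (c' & A' & B' & IH)]; simpl; [eauto|].
  rewrite IH, pder_mono; destruct (j =? 0); eauto.
Qed.

Lemma continuous_pow_comp (g : R * R -> R) (A : nat) x :
  continuous g x -> continuous (fun y => g y ^ A) x.
Proof.
  intros Hg; induction A as [|A IH]; simpl.
  - apply continuous_const.
  - exact (continuous_mult (K := R_AbsRing) g (fun y => g y ^ A) x Hg IH).
Qed.

Lemma continuous_mono c A B x : continuous (mono c A B) x.
Proof.
  apply (continuous_mult (K := R_AbsRing) (fun y => c * fst y ^ A) (fun y => snd y ^ B)).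
  - apply (continuous_mult (K := R_AbsRing) (fun _ => c)); [apply continuous_const|].
    apply continuous_pow_comp, continuous_fst.
  - apply continuous_pow_comp, continuous_snd.
Qed.

Lemma smooth_mono c A B : smooth_scalar (mono c A B).
Proof.
  intros js; destruct (iterp_mono js c A B) as (c' & A' & B' & ->).
  split; intros; [apply ex_derive_mono | apply continuous_mono].
Qed.

Definition mono_vf (c0 c1 : R) (A B : nat) : VF := fun x => (mono c0 A B x, mono c1 A B x).

Lemma smooth_mono_vf c0 c1 A B : smooth_vf (mono_vf c0 c1 A B).
Proof. split; apply smooth_mono. Qed.

Lemma pderV_mono_vf j c0 c1 A B :
  pderV j (mono_vf c0 c1 A B) =
  if j =? 0 then mono_vf (c0 * INR A) (c1 * INR A) (A - 1) B
  else mono_vf (c0 * INR B) (c1 * INR B) A (B - 1).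
Proof.
  unfold pderV, mono_vf; simpl.
  change (fun y => mono c0 A B y) with (mono c0 A B).
  change (fun y => mono c1 A B y) with (mono c1 A B).
  rewrite !pder_mono; destruct (j =? 0); reflexivity.
Qed.

(* The subtraction [A - 1] is truncated, harmlessly: its term carries the factor [INR A]. *)
Fixpoint Gmono (vs : list (R * R)) (A B : nat) (x : R * R) : R :=
  match vs with
  | [] => fst x ^ A * snd x ^ B
  | v :: vs => fst v * INR A * Gmono vs (A - 1) B x + snd v * INR B * Gmono vs A (B - 1) x
  end.

Lemma Gop_mono_vf ks c0 c1 A B x :
  Gop ks (mono_vf c0 c1 A B) x =
  (c0 * Gmono (map (fun k => k x) ks) A B x, c1 * Gmono (map (fun k => k x) ks) A B x).
Proof.
  revert c0 c1 A B; induction ks as [|k ks IH]; intros c0 c1 A B; simpl.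
  - unfold mono_vf, mono; f_equal; ring.
  - rewrite !pderV_mono_vf; simpl; rewrite !IH; simpl; f_equal; ring.
Qed.

Definition axis (b : bool) (a : R) : R * R := if b then (0, a) else (a, 0).

Lemma axis_neq0 b a : axis b a <> (0, 0) <-> a <> 0.
Proof.
  unfold axis; destruct b; split; intros H E; apply H;
    [rewrite E | injection E | rewrite E | injection E]; auto.
Qed.

Lemma Rmult_neq0_iff x y : x * y <> 0 <-> x <> 0 /\ y <> 0.
Proof.
  split; [apply Rmult_neq_0_reg|].
  intros [Hx Hy]; apply Rmult_integral_contrapositive_currified; assumption.
Qed.

Lemma INR_neq0_iff n : INR n <> 0 <-> n <> 0%nat.
Proof. split; [apply INR_not_0 | apply not_0_INR]. Qed.

Lemma pow0_neq0_iff n : 0 ^ n <> 0 <-> n = 0%nat.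
Proof.
  split; [|intros ->; simpl; lra].
  intros H; destruct n; [reflexivity|]; exfalso; apply H, pow_i; lia.
Qed.

Lemma Gmono_axis_origin_neq0 w (a : nat -> R) l A B :
  Gmono (map (fun c => axis (c =? w) (a c)) l) A B (0, 0) <> 0 <->
  (count_occ Nat.eq_dec l w = B /\ length l - count_occ Nat.eq_dec l w = A)%nat /\
  (forall c, In c l -> a c <> 0).
Proof.
  revert A B; induction l as [|c l IH]; intros A B.
  - simpl; rewrite Rmult_neq0_iff, !pow0_neq0_iff.
    split; [intros [-> ->]; repeat split; auto; intros _ []|intros [[<- <-] _]]; auto.
  - pose proof (count_occ_bound Nat.eq_dec w l) as Hle.
    cbn [map Gmono length In].
    destruct (Nat.eq_dec c w) as [->|Hne].
    + rewrite count_occ_cons_eq, Nat.eqb_refl by reflexivity; cbn [axis fst snd].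
      rewrite Rmult_0_l, Rmult_0_l, Rplus_0_l.
      rewrite !Rmult_neq0_iff, INR_neq0_iff, IH.
      split; [intros ([Ha HB] & [Hc Hl] & Hf)|intros ([Hc Hl] & Hf)].
      * split; [split; lia|]; intros c [<-|Hc']; auto.
      * split; [split; [apply Hf; left; reflexivity|lia]|].
        split; [split; lia|]; intros c Hc'; apply Hf; right; exact Hc'.
    + rewrite count_occ_cons_neq, (proj2 (Nat.eqb_neq c w) Hne) by exact Hne.
      cbn [axis fst snd].
      rewrite Rmult_0_l, Rmult_0_l, Rplus_0_r.
      rewrite !Rmult_neq0_iff, INR_neq0_iff, IH.
      split; [intros ([Ha HA] & [Hc Hl] & Hf)|intros ([Hc Hl] & Hf)].
      * split; [split; lia|]; intros c' [<-|Hc']; auto.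
      * split; [split; [apply Hf; left; reflexivity|lia]|].
        split; [split; lia|]; intros c' Hc'; apply Hf; right; exact Hc'.
Qed.

Lemma in_children E v c : In c (children E v) <-> In (v, c) E.
Proof.
  unfold children; rewrite in_map_iff; split.
  - intros ([a b] & <- & Hin); apply filter_In in Hin as [Hin Ha].
    simpl in Ha; apply Nat.eqb_eq in Ha; subst; exact Hin.
  - intros H; exists (v, c); split; [reflexivity|].
    apply filter_In; split; [exact H|apply Nat.eqb_refl].
Qed.

Definition descendant (E : list (nat * nat)) : relation nat :=
  clos_refl_trans nat (fun a b => In (b, a) E).

Lemma descendant_inv E u v :
  descendant E u v -> u = v \/ exists c, In c (children E v) /\ descendant E u c.
Proof.
  intros H; apply clos_rt_rtn1 in H; destruct H as [|c v Hcv Huc]; [left; reflexivity|].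
  right; exists c; split; [apply in_children, Hcv | apply clos_rtn1_rt, Huc].
Qed.

Definition descending_path (E : list (nat * nat)) (n v : nat) : Prop :=
  exists c : nat -> nat, c 0%nat = v /\ forall i, (i < n)%nat -> In (c i, c (S i)) E.

Lemma descending_path_0 E v : descending_path E 0 v.
Proof. exists (fun _ => v); split; [reflexivity|lia]. Qed.

Lemma descending_path_cons E n v c :
  In (v, c) E -> descending_path E n c -> descending_path E (S n) v.
Proof.
  intros Hvc (f & Hf0 & Hf).
  exists (fun i => match i with 0%nat => v | S i => f i end); split; [reflexivity|].
  intros [|i] Hi; [rewrite Hf0; exact Hvc | apply Hf; lia].
Qed.

Section AxisTestFields.

Variables (E : list (nat * nat)) (w : nat) (A B : nat -> nat).

Definition axis_vf (v : nat) : VF :=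
  mono_vf (if v =? w then 0 else 1) (if v =? w then 1 else 0) (A v) (B v).

Lemma Gop_axis_vf ks v x :
  Gop ks (axis_vf v) x =
  ((if v =? w then 0 else 1) * Gmono (map (fun k => k x) ks) (A v) (B v) x,
   (if v =? w then 1 else 0) * Gmono (map (fun k => k x) ks) (A v) (B v) x).
Proof. apply Gop_mono_vf. Qed.

Definition origin_coord (n v : nat) : R :=
  let y := Fv n E axis_vf v (0, 0) in if v =? w then snd y else fst y.

Lemma Fv_axis_vf_origin n v : Fv n E axis_vf v (0, 0) = axis (v =? w) (origin_coord n v).
Proof.
  unfold origin_coord.
  assert (Hks : exists ks, Fv n E axis_vf v = Gop ks (axis_vf v))
    by (destruct n; [exists [] | eexists]; reflexivity).
  destruct Hks as [ks ->]; rewrite Gop_axis_vf; unfold axis.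
  destruct (v =? w); simpl; f_equal; ring.
Qed.

Definition child_counts_fit (u : nat) : Prop :=
  (count_occ Nat.eq_dec (children E u) w = B u /\
   length (children E u) - count_occ Nat.eq_dec (children E u) w = A u)%nat.

Lemma origin_coord_succ_neq0 n v :
  origin_coord (S n) v <> 0 <->
  child_counts_fit v /\ forall c, In c (children E v) -> origin_coord n c <> 0.
Proof.
  assert (Hvals : map (fun k => k (0, 0)) (map (Fv n E axis_vf) (children E v)) =
                  map (fun c => axis (c =? w) (origin_coord n c)) (children E v))
    by (rewrite map_map; apply map_ext, Fv_axis_vf_origin).
  unfold origin_coord at 1, child_counts_fit; cbn [Fv].
  rewrite Gop_axis_vf, Hvals, <- Gmono_axis_origin_neq0.
  destruct (v =? w); simpl; rewrite Rmult_1_l; reflexivity.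
Qed.

(* Fuel [n] is enough for [Fv] to reach every descendant of [v] as soon as no
   downward path of length [n] starts at [v]. *)
Lemma origin_coord_neq0_iff n v :
  ~ descending_path E n v ->
  origin_coord n v <> 0 <-> forall u, descendant E u v -> child_counts_fit u.
Proof.
  revert v; induction n as [|n IH]; intros v Hch; [exfalso; exact (Hch (descending_path_0 E v))|].
  assert (Hchc : forall c, In c (children E v) -> ~ descending_path E n c)
    by (intros c Hc Hcc; apply Hch, (descending_path_cons _ _ _ c), Hcc; apply in_children, Hc).
  rewrite origin_coord_succ_neq0; split.
  - intros [Hv Hc] u Hu.
    destruct (descendant_inv E u v Hu) as [->|(c & Hc' & Huc)]; [exact Hv|].
    exact (proj1 (IH c (Hchc c Hc')) (Hc c Hc') u Huc).
  - intros H; split; [apply H, rt_refl|].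
    intros c Hc; apply (IH c (Hchc c Hc)); intros u Hu; apply H.
    apply rt_trans with c; [exact Hu | apply rt_step, in_children, Hc].
Qed.

End AxisTestFields.

Lemma pigeonhole_nat_fun (c : nat -> nat) (V : list nat) n :
  (length V <= n)%nat -> (forall i, (i <= n)%nat -> In (c i) V) ->
  exists i j, (i < j <= n)%nat /\ c i = c j.
Proof.
  intros Hlen HV; apply NNPP; intros Hno.
  assert (Hnd : NoDup (map c (seq 0 (S n)))).
  { apply FinFun.Injective_map_NoDup_in; [|apply seq_NoDup].
    intros i j Hi Hj Hij; apply in_seq in Hi, Hj.
    destruct (Nat.lt_total i j) as [Hlt|[Heq|Hgt]]; [| exact Heq |];
      exfalso; apply Hno; [exists i, j | exists j, i]; split; auto; lia. }
  apply NoDup_incl_length with (l' := V) in Hnd.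
  - rewrite length_map, length_seq in Hnd; lia.
  - intros a Ha; apply in_map_iff in Ha as (i & <- & Hi); apply in_seq in Hi.
    apply HV; lia.
Qed.

Lemma NoDup_children E v : NoDup E -> NoDup (children E v).
Proof.
  intros HE; unfold children; apply FinFun.Injective_map_NoDup_in; [|apply NoDup_filter, HE].
  intros [a b] [a' b'] H H' Hb; apply filter_In in H as [_ Ha], H' as [_ Ha'].
  simpl in *; apply Nat.eqb_eq in Ha, Ha'; congruence.
Qed.

Section RootedTree.

Variables (V : list nat) (E : list (nat * nat)) (r : nat).
Hypothesis tree : rooted_at V E r.

Lemma tree_root_eq : tree_root V E = r.
Proof.
  destruct tree as (_ & _ & _ & Hr & Hnr & Hroot & _).
  unfold tree_root; destruct (find _ V) as [v|] eqn:Hf.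
  - apply find_some in Hf as [Hv Hb]; apply Hroot; [exact Hv|].
    intros u Hu; apply Bool.negb_true_iff in Hb.
    rewrite (proj2 (existsb_exists _ _)) in Hb; [discriminate|].
    exists (u, v); split; [exact Hu | apply Nat.eqb_refl].
  - exfalso; pose proof (find_none _ _ Hf r Hr) as H; simpl in H.
    apply Bool.negb_false_iff, existsb_exists in H as ([a b] & Hab & Hb).
    simpl in Hb; apply Nat.eqb_eq in Hb; subst; exact (Hnr a Hab).
Qed.

Lemma parent_unique a b x : In (a, x) E -> In (b, x) E -> a = b.
Proof.
  destruct tree as (_ & _ & Hin & _ & Hnr & _ & Huniq & _); intros Ha Hb.
  assert (Hx : x <> r) by (intros ->; exact (Hnr a Ha)).
  destruct (Huniq x (proj2 (Hin a x Ha)) Hx) as (p & _ & Hp).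
  rewrite <- (Hp a Ha); exact (Hp b Hb).
Qed.

Lemma descendant_root_iff u : descendant E u r <-> In u V.
Proof.
  destruct tree as (_ & _ & Hin & Hr & _ & _ & _ & Hreach); split; [|apply Hreach].
  intros Hu; apply clos_rt_rt1n in Hu; destruct Hu as [|? y Hyu _]; [exact Hr|].
  exact (proj2 (Hin _ u Hyu)).
Qed.

(* Every vertex on a cycle has its (unique) parent on the cycle, so the cycle is
   closed under going up; but the root, which every vertex reaches, has no parent. *)
Lemma no_cycle (d : nat -> nat) m :
  (0 < m)%nat -> (forall k, (k < m)%nat -> In (d k, d (S k)) E) -> d m <> d 0%nat.
Proof.
  destruct tree as (_ & _ & Hin & _ & Hnr & _ & _ & Hreach); intros Hm Hd Hcyc.
  set (C := fun a => exists k, (k < m)%nat /\ d k = a).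
  assert (Hpar : forall a, C a -> exists b, C b /\ In (b, a) E).
  { intros a (k & Hk & <-); destruct k as [|k].
    - exists (d (m - 1)%nat); split; [exists (m - 1)%nat; split; [lia|reflexivity]|].
      rewrite <- Hcyc; replace m with (S (m - 1)) at 2 by lia; apply Hd; lia.
    - exists (d k); split; [exists k; split; [lia|reflexivity] | apply Hd; lia]. }
  assert (Hup : forall x y, descendant E x y -> C x -> C y).
  { intros x y Hxy; induction Hxy as [x y Hyx| |]; auto.
    intros Cx; destruct (Hpar x Cx) as (b & Cb & Hbx).
    rewrite (parent_unique y b x Hyx Hbx); exact Cb. }
  assert (Cr : C r).
  { apply (Hup (d 0%nat)); [apply Hreach, (Hin _ (d 1%nat)), Hd, Hm|exists 0%nat; split; auto]. }
  destruct (Hpar r Cr) as (b & _ & Hb); exact (Hnr b Hb).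
Qed.

Lemma no_long_descending_path v : ~ descending_path E (length V) v.
Proof.
  intros (c & _ & Hc).
  pose proof tree as (_ & _ & Hin & Hr & _).
  assert (HV : forall i, (i <= length V)%nat -> In (c i) V).
  { intros i Hi; destruct (Nat.eq_dec i (length V)) as [->|Hne].
    - destruct V as [|x V']; [destruct Hr|]; apply (Hin (c (length V'))), Hc; simpl; lia.
    - apply (Hin _ (c (S i))), Hc; lia. }
  destruct (pigeonhole_nat_fun c V (length V) (le_n _) HV) as (i & j & Hij & Hcij).
  apply (no_cycle (fun k => c (i + k)%nat) (j - i)); [lia| |].
  - intros k Hk; rewrite Nat.add_succ_r; apply Hc; lia.
  - cbn beta; rewrite Nat.add_0_r, Hcij; f_equal; lia.
Qed.

Lemma edge_iff_counts p w :
  In p V ->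
  (forall u, In u V -> count_occ Nat.eq_dec (children E u) w = Nat.b2n (u =? p)) <->
  In (p, w) E.
Proof.
  intros Hp; split.
  - intros H; specialize (H p Hp); rewrite Nat.eqb_refl in H.
    apply in_children, (count_occ_In Nat.eq_dec); rewrite H; exact Nat.lt_0_1.
  - intros Hpw u _; destruct (Nat.eq_dec u p) as [->|Hne].
    + rewrite Nat.eqb_refl; apply (NoDup_count_occ' Nat.eq_dec), in_children; [|exact Hpw].
      apply NoDup_children; destruct tree as (_ & HE & _); exact HE.
    + rewrite (proj2 (Nat.eqb_neq u p) Hne); apply count_occ_not_In.
      intros Huw; apply Hne, (parent_unique u p w); [apply in_children|]; assumption.
Qed.

End RootedTree.

Lemma Ftree_axis_vf_neq0 V E r w A B :
  rooted_at V E r ->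
  Ftree V E (axis_vf w A B) (0, 0) <> (0, 0) <->
  forall u, In u V -> child_counts_fit E w A B u.
Proof.
  intros Ht; unfold Ftree.
  rewrite (tree_root_eq V E r Ht), Fv_axis_vf_origin, axis_neq0,
    (origin_coord_neq0_iff _ _ _ _ _ _ (no_long_descending_path V E r Ht r)).
  split; intros H u Hu; apply H, (descendant_root_iff V E r Ht), Hu.
Qed.

Definition edge_test_vf (E : list (nat * nat)) (p w : nat) : nat -> VF :=
  axis_vf w (fun u => length (children E u) - Nat.b2n (u =? p))%nat
    (fun u => Nat.b2n (u =? p)).

Lemma Ftree_edge_test_neq0 V E E' r p w :
  rooted_at V E' r -> In p V ->
  (forall u, length (children E' u) = length (children E u)) ->
  Ftree V E' (edge_test_vf E p w) (0, 0) <> (0, 0) <-> In (p, w) E'.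
Proof.
  intros Ht Hp Hlen; unfold edge_test_vf.
  rewrite (Ftree_axis_vf_neq0 V E' r _ _ _ Ht), <- (edge_iff_counts V E' r Ht p w Hp).
  unfold child_counts_fit; split; intros H u Hu; [apply H, Hu|].
  rewrite Hlen, H by exact Hu; split; reflexivity.
Qed.

Lemma F_eq_incl V E E' r r' :
  rooted_at V E r -> rooted_at V E' r' ->
  (forall u, length (children E' u) = length (children E u)) ->
  F_eq V E E' -> incl E E'.
Proof.
  intros Ht Ht' Hlen HF [p w] Hpw.
  assert (Hp : In p V) by (destruct Ht as (_ & _ & Hin & _); exact (proj1 (Hin p w Hpw))).
  apply (Ftree_edge_test_neq0 V E E' r' p w Ht' Hp Hlen).
  rewrite <- HF by (intros; apply smooth_mono_vf).
  exact (proj2 (Ftree_edge_test_neq0 V E E r p w Ht Hp (fun _ => eq_refl)) Hpw).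
Qed.

Lemma F_eq_same_set V E E' r r' :
  rooted_at V E r -> rooted_at V E' r' ->
  (forall u, length (children E' u) = length (children E u)) ->
  F_eq V E E' -> same_set E' E.
Proof.
  intros Ht Ht' Hlen HF e; split.
  - apply (F_eq_incl V E' E r' r Ht' Ht (fun u => eq_sym (Hlen u))).
    intros f Hf x; symmetry; apply HF, Hf.
  - exact (F_eq_incl V E E' r r' Ht Ht' Hlen HF e).
Qed.

Lemma pder_comm h : smooth_scalar h -> forall x, pder 0 (pder 1 h) x = pder 1 (pder 0 h) x.
Proof.
  intros Hs [a b].
  change (Derive (fun z => Derive (fun t => (fun u v => h (u, v)) z t) b) a =
          Derive (fun z => Derive (fun t => (fun u v => h (u, v)) t z) a) b).
  apply Schwarz.
  - exists (mkposreal 1 Rlt_0_1); intros u v _ _; repeat split.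
    + exact (proj1 (Hs []) 0%nat (u, v) ltac:(lia)).
    + exact (proj1 (Hs []) 1%nat (u, v) ltac:(lia)).
    + exact (proj1 (Hs [1%nat]) 0%nat (u, v) ltac:(lia)).
    + exact (proj1 (Hs [0%nat]) 1%nat (u, v) ltac:(lia)).
  - apply continuity_2d_pt_filterlim.
    eapply filterlim_ext; [|exact (proj2 (Hs [0%nat; 1%nat]) (a, b))].
    intros [u v]; reflexivity.
  - apply continuity_2d_pt_filterlim.
    eapply filterlim_ext; [|exact (proj2 (Hs [1%nat; 0%nat]) (a, b))].
    intros [u v]; reflexivity.
Qed.

Lemma iterp_app js j h : iterp (js ++ [j]) h = iterp js (pder j h).
Proof. induction js as [|k js IH]; simpl; [reflexivity|]; rewrite IH; reflexivity. Qed.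

Lemma smooth_pder j h : smooth_scalar h -> smooth_scalar (pder j h).
Proof. intros Hs js; rewrite <- iterp_app; apply Hs. Qed.

Lemma smooth_pderV j g : smooth_vf g -> smooth_vf (pderV j g).
Proof. intros [H1 H2]; split; apply smooth_pder; assumption. Qed.

Lemma pderV_comm g : smooth_vf g -> pderV 0 (pderV 1 g) = pderV 1 (pderV 0 g).
Proof.
  intros [H1 H2]; apply functional_extensionality; intros x.
  unfold pderV at 1 3; simpl; f_equal; apply pder_comm; assumption.
Qed.

Lemma Gop_perm l l' g : Permutation l l' -> smooth_vf g -> forall x, Gop l g x = Gop l' g x.
Proof.
  intros HP; revert g; induction HP as [| k l l' _ IH | k1 k2 l | l l' l'' _ IH1 _ IH2];
    intros g Hg x.
  - reflexivity.
  - simpl; rewrite !IH by (apply smooth_pderV, Hg); reflexivity.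
  - simpl; rewrite (pderV_comm g Hg); f_equal; ring.
  - rewrite IH1, IH2 by exact Hg; reflexivity.
Qed.

Lemma Fv_same_set V E E' f :
  NoDup E -> NoDup E' -> same_set E E' ->
  (forall v w, In (v, w) E -> In v V /\ In w V) ->
  (forall i, In i V -> smooth_vf (f i)) ->
  forall n v, Fv n E f v = Fv n E' f v.
Proof.
  intros HE HE' Hss Hin Hf n; induction n as [|n IH]; intros v; [reflexivity|].
  apply functional_extensionality; intros x; simpl; rewrite (map_ext _ _ IH).
  assert (HP : Permutation (children E v) (children E' v)).
  { apply NoDup_Permutation; [apply NoDup_children, HE | apply NoDup_children, HE' |].
    intros c; rewrite !in_children; apply Hss. }
  destruct (children E v) as [|c ch] eqn:Hc.
  - rewrite (Permutation_nil HP); reflexivity.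
  - apply Gop_perm; [apply Permutation_map, HP|].
    apply Hf, (Hin v c), in_children; rewrite Hc; left; reflexivity.
Qed.

Lemma tree_root_same_set V E E' : same_set E E' -> tree_root V E = tree_root V E'.
Proof.
  intros Hss; unfold tree_root.
  replace (fun v => negb (existsb (fun e => snd e =? v) E))
    with (fun v => negb (existsb (fun e => snd e =? v) E')); [reflexivity|].
  apply functional_extensionality; intros v; f_equal.
  apply Bool.eq_iff_eq_true; rewrite !existsb_exists.
  split; intros (e & He & Hv); exists e; split; [apply Hss | | apply Hss | ]; assumption.
Qed.

Lemma same_set_F_eq V E E' r :
  rooted_at V E r -> NoDup E' -> same_set E E' -> F_eq V E E'.
Proof.
  intros (_ & HE & Hin & _) HE' Hss f Hf x; unfold Ftree.
  rewrite (tree_root_same_set V E E' Hss), (Fv_same_set V E E' f HE HE' Hss Hin Hf).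
  reflexivity.
Qed.

Lemma children_act s E v : children (act s E) v = map s (children E v).
Proof.
  unfold children, act; induction E as [|[a b] E IH]; simpl; [reflexivity|].
  destruct (a =? v); simpl; rewrite IH; reflexivity.
Qed.

Theorem proposition3p4 (V : list nat) (E : list (nat * nat)) (s : nat -> nat) :
  is_rooted_tree V E -> bij_on V s -> is_rooted_tree V (act s E) ->
  (F_eq V E (act s E) ->
     (forall v, In v V ->
        forall y, (exists w, In w (children E v) /\ s w = y) <-> In y (children E v)) /\
     same_set (act s E) E) /\
  (F_eq V (act s E) E <-> same_set (act s E) E).
Proof.
  intros [r Ht] _ [r' Ht'].
  assert (Hlen : forall v, length (children (act s E) v) = length (children E v))
    by (intros v; rewrite children_act, length_map; reflexivity).
  assert (Hsym : F_eq V (act s E) E -> F_eq V E (act s E))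
    by (intros HF f Hf x; symmetry; apply HF, Hf).
  assert (Himage : same_set (act s E) E -> forall v y,
            (exists w, In w (children E v) /\ s w = y) <-> In y (children E v)).
  { intros Hss v y; transitivity (In y (map s (children E v))).
    - rewrite in_map_iff; split; intros (w & H1 & H2); exists w; split; assumption.
    - rewrite <- children_act, !in_children; apply Hss. }
  pose proof (F_eq_same_set V E (act s E) r r' Ht Ht' Hlen) as Hsame.
  split; [intros HF; split; [intros v _; apply Himage|]; apply Hsame, HF|].
  split; [intros HF; apply Hsame, Hsym, HF|].
  intros Hss; apply (same_set_F_eq V (act s E) E r' Ht'); [apply Ht | exact Hss].
Qed.
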